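(* Consider any $(M,N)$-VLF code over a DMC $P_{Y|X}$ with finite alphabets. Then for every $n\ge0$, almost surely, $$\mathbb{E}\big[\ln\mathcal{H}(W|Y^n)-\ln\mathcal{H}(W|Y^{n+1})\,\big|\,Y^n\big]\le B.$$
   Context: $B=\max_{x,x'\in\mathcal{X}}D(P_{Y|X}(\cdot|x)\|P_{Y|X}(\cdot|x'))$ (possibly $+\infty$). An $(M,N)$-VLF code has a message $W$ uniform on $\{1,\dots,M\}$ and encoders $X_n=f_n(W,Y^{n-1})$, where conditionally on $(W,X^n,Y^{n-1})$ the output $Y_n$ has law $P_{Y|X}(\cdot|X_n)$ (feedback of past outputs to the encoder). The random conditional entropy is $\mathcal{H}(W|Y^n)=-\sum_{w=1}^M\mathbb{P}(W=w|Y^n)\ln\mathbb{P}(W=w|Y^n)$ (natural logarithms). *)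

From Stdlib Require Import Reals List.
Open Scope R_scope.

(* Alphabets are encoded as {0,...,k-1} (k : nat); messages W in {0,...,M-1}. *)

Definition sumn (k : nat) (f : nat -> R) : R :=
  fold_right Rplus 0 (map f (seq 0 k)).
Definition prodn (k : nat) (f : nat -> R) : R :=
  fold_right Rmult 1 (map f (seq 0 k)).

(* P : nX inputs, nY outputs, P x y = P_{Y|X}(y|x) is a stochastic matrix *)
Definition is_DMC (nX nY : nat) (P : nat -> nat -> R) : Prop :=
  (0 < nX)%nat /\
  (forall x y, (x < nX)%nat -> (y < nY)%nat -> 0 <= P x y) /\
  (forall x, (x < nX)%nat -> sumn nY (P x) = 1).

(* KL divergence D(P(.|x) || P(.|x')) in nats, with 0 ln(0/q) = 0.
   It is finite iff kl_finite holds (absolute continuity). *)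
Definition kl_finite (nY : nat) (P : nat -> nat -> R) (x x' : nat) : Prop :=
  forall y, (y < nY)%nat -> P x' y = 0 -> P x y = 0.
Definition kl (nY : nat) (P : nat -> nat -> R) (x x' : nat) : R :=
  sumn nY (fun y => if Req_EM_T (P x y) 0 then 0
                    else P x y * ln (P x y / P x' y)).

(* Feedback encoder: enc w ys = X_{i+1} = f_{i+1}(w, Y^i) where ys = Y^i
   (so the time index i+1 = length ys + 1 is carried by ys). *)
Definition valid_encoder (M nX : nat) (enc : nat -> list nat -> nat) : Prop :=
  forall w ys, (w < M)%nat -> (enc w ys < nX)%nat.

Definition valid_outputs (nY : nat) (ys : list nat) : Prop :=
  forall y, In y ys -> (y < nY)%nat.

(* P(W = w, Y^n = ys), W uniform on M messages *)
Definition pjoint (M : nat) (P : nat -> nat -> R) (enc : nat -> list nat -> nat)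
  (w : nat) (ys : list nat) : R :=
  / INR M * prodn (length ys)
              (fun i => P (enc w (firstn i ys)) (nth i ys 0%nat)).

Definition pY (M : nat) P enc (ys : list nat) : R :=
  sumn M (fun w => pjoint M P enc w ys).

Definition post (M : nat) P enc (w : nat) (ys : list nat) : R :=
  pjoint M P enc w ys / pY M P enc ys.

Definition condH (M : nat) P enc (ys : list nat) : R :=
  - sumn M (fun w => let p := post M P enc w ys in
                     if Req_EM_T p 0 then 0 else p * ln p).

From Stdlib Require Import Reals List Lra Lia.
From Coquelicot Require Import Coquelicot.
Open Scope R_scope.

(* Write the entropy of the posterior as a sum of [negxlnx x = - x ln x] over the
   messages.  With the weights [negxlnx (p w) / H(p)], Jensen's inequality bounds
   [ln H(p) - ln H(p(.|y))] by the weighted average of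
   [ln (negxlnx t) - ln (negxlnx s)] with [t = p w] and [s = p(w|y)].  Since
   [negxlnx x = x (1 - x) / logmean x] with [logmean x = (x - 1) / ln x] concave on
   (0,1), each such term is at most
   [- ln (s/t) - ln ((1-s)/(1-t)) + logmean' t / logmean t * (s - t)].
   Averaged over the output [y], the linear term vanishes (the posterior is a
   martingale), and by the log-sum inequality the two logarithmic terms are at most
   [(1 - t) B] and [t B], being dominated by divergences between the output law of
   message [w] and those of the other messages. *)

Lemma sumn_S k f : sumn (S k) f = sumn k f + f k.
Proof.
  unfold sumn. rewrite seq_S, map_app, fold_right_app. simpl.
  induction (map f (seq 0 k)) as [|a l IH]; simpl; [ring|]. rewrite IH. ring.
Qed.

Lemma sumn_ext k f g : (forall i, (i < k)%nat -> f i = g i) -> sumn k f = sumn k g.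
Proof.
  induction k as [|k IH]; intros Hfg; [reflexivity|].
  rewrite !sumn_S, IH, (Hfg k); [reflexivity|lia|intros; apply Hfg; lia].
Qed.

Lemma sumn_zero k : sumn k (fun _ => 0) = 0.
Proof. induction k as [|k IH]; [reflexivity|]. rewrite sumn_S, IH. ring. Qed.

Lemma sumn_plus k f g : sumn k (fun i => f i + g i) = sumn k f + sumn k g.
Proof. induction k as [|k IH]; [unfold sumn; simpl; ring|]. rewrite !sumn_S, IH. ring. Qed.

Lemma sumn_minus k f g : sumn k (fun i => f i - g i) = sumn k f - sumn k g.
Proof. induction k as [|k IH]; [unfold sumn; simpl; ring|]. rewrite !sumn_S, IH. ring. Qed.

Lemma sumn_scal k c f : sumn k (fun i => c * f i) = c * sumn k f.
Proof. induction k as [|k IH]; [unfold sumn; simpl; ring|]. rewrite !sumn_S, IH. ring. Qed.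

Lemma sumn_opp k f : sumn k (fun i => - f i) = - sumn k f.
Proof. induction k as [|k IH]; [unfold sumn; simpl; ring|]. rewrite !sumn_S, IH. ring. Qed.

Lemma sumn_comm a b f :
  sumn a (fun i => sumn b (fun j => f i j)) = sumn b (fun j => sumn a (fun i => f i j)).
Proof.
  induction a as [|a IH].
  - rewrite sumn_zero. reflexivity.
  - rewrite sumn_S, IH, <- sumn_plus. apply sumn_ext. intros. rewrite sumn_S. reflexivity.
Qed.

Lemma sumn_le k f g : (forall i, (i < k)%nat -> f i <= g i) -> sumn k f <= sumn k g.
Proof.
  induction k as [|k IH]; intros Hfg; [unfold sumn; simpl; lra|]. rewrite !sumn_S.
  pose proof (IH ltac:(intros; apply Hfg; lia)). pose proof (Hfg k ltac:(lia)). lra.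
Qed.

Lemma sumn_nonneg k f : (forall i, (i < k)%nat -> 0 <= f i) -> 0 <= sumn k f.
Proof. intros Hf. rewrite <- (sumn_zero k). apply sumn_le. exact Hf. Qed.

Lemma sumn_ge_term k f i :
  (forall j, (j < k)%nat -> 0 <= f j) -> (i < k)%nat -> f i <= sumn k f.
Proof.
  induction k as [|k IH]; intros Hf Hi; [lia|]. rewrite sumn_S.
  destruct (Nat.eq_dec i k) as [->|Hik].
  - pose proof (sumn_nonneg k f ltac:(intros; apply Hf; lia)). lra.
  - pose proof (IH ltac:(intros; apply Hf; lia) ltac:(lia)). pose proof (Hf k ltac:(lia)). lra.
Qed.

Lemma sumn_pos k f i :
  (forall j, (j < k)%nat -> 0 <= f j) -> (i < k)%nat -> 0 < f i -> 0 < sumn k f.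
Proof. intros Hf Hi Hfi. pose proof (sumn_ge_term k f i Hf Hi). lra. Qed.

Lemma sumn_neq0_term k f : sumn k f <> 0 -> exists i, (i < k)%nat /\ f i <> 0.
Proof.
  induction k as [|k IH]; intros Hs; [unfold sumn in Hs; simpl in Hs; lra|].
  rewrite sumn_S in Hs. destruct (Req_dec (f k) 0) as [Hk|Hk].
  - destruct IH as [i [Hi Hfi]]; [lra|]. exists i. split; [lia|exact Hfi].
  - exists k. split; [lia|exact Hk].
Qed.

Lemma sumn_nonneg_eq0 k f i :
  (forall j, (j < k)%nat -> 0 <= f j) -> sumn k f = 0 -> (i < k)%nat -> f i = 0.
Proof. intros Hf Hs Hi. pose proof (sumn_ge_term k f i Hf Hi). pose proof (Hf i Hi). lra. Qed.

Lemma sumn_split_at k i g : (i < k)%nat ->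
  sumn k g = g i + sumn k (fun j => if Nat.eqb j i then 0 else g j).
Proof.
  induction k as [|k IH]; intros Hi; [lia|]. rewrite !sumn_S.
  destruct (Nat.eq_dec i k) as [->|Hik].
  - rewrite Nat.eqb_refl.
    rewrite (sumn_ext k (fun j => if Nat.eqb j k then 0 else g j) g); [ring|].
    intros j Hj. destruct (Nat.eqb_spec j k); [lia|reflexivity].
  - rewrite IH by lia. destruct (Nat.eqb_spec k i); [lia|ring].
Qed.

Lemma prodn_S k f : prodn (S k) f = prodn k f * f k.
Proof.
  unfold prodn. rewrite seq_S, map_app, fold_right_app. simpl.
  induction (map f (seq 0 k)) as [|a l IH]; simpl; [ring|]. rewrite IH. ring.
Qed.

Lemma prodn_ext k f g : (forall i, (i < k)%nat -> f i = g i) -> prodn k f = prodn k g.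
Proof.
  induction k as [|k IH]; intros Hfg; [reflexivity|].
  rewrite !prodn_S, IH, (Hfg k); [reflexivity|lia|intros; apply Hfg; lia].
Qed.

Lemma prodn_nonneg k f : (forall i, (i < k)%nat -> 0 <= f i) -> 0 <= prodn k f.
Proof.
  induction k as [|k IH]; intros Hf; [unfold prodn; simpl; lra|]. rewrite prodn_S.
  apply Rmult_le_pos; [apply IH; intros; apply Hf|apply Hf]; lia.
Qed.

(** * Real analysis *)

Lemma ln_le_sub1 x : 0 < x -> ln x <= x - 1.
Proof. intros Hx. pose proof (exp_ineq1_le (ln x)) as H. rewrite exp_ln in H; lra. Qed.

Lemma one_sub_inv_le_ln x : 0 < x -> 1 - / x <= ln x.
Proof.
  intros Hx. pose proof (ln_le_sub1 (/ x) (Rinv_0_lt_compat _ Hx)) as H.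
  rewrite ln_Rinv in H; lra.
Qed.

Lemma ln_lt0 x : 0 < x < 1 -> ln x < 0.
Proof. intros Hx. rewrite <- ln_1. apply ln_increasing; lra. Qed.

Lemma nondecreasing_of_derive_nonneg (f df : R -> R) a b : a <= b ->
  (forall x, a <= x <= b -> is_derive f x (df x)) ->
  (forall x, a <= x <= b -> 0 <= df x) -> f a <= f b.
Proof.
  intros Hab Hd Hpos.
  destruct (MVT_gen f a b df) as [c [Hc Heq]].
  - intros x Hx. rewrite Rmin_left, Rmax_right in Hx by lra. apply Hd; lra.
  - intros x Hx. rewrite Rmin_left, Rmax_right in Hx by lra.
    apply continuity_pt_filterlim, (ex_derive_continuous (K := R_AbsRing) (V := R_NormedModule)).
    exists (df x). apply Hd; lra.
  - rewrite Rmin_left, Rmax_right in Hc by lra.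
    pose proof (Rmult_le_pos (df c) (b - a) ltac:(apply Hpos; lra) ltac:(lra)). lra.
Qed.

Lemma below_tangent_of_derive_nonincreasing (f df : R -> R) a b t s :
  (forall x, a < x < b -> is_derive f x (df x)) ->
  (forall x y, a < x -> x <= y -> y < b -> df y <= df x) ->
  a < t < b -> a < s < b -> f s <= f t + df t * (s - t).
Proof.
  intros Hd Hdecr Ht Hs.
  set (G := fun z => f t + df t * (z - t) - f z).
  assert (HG : forall z, a < z < b -> is_derive G z (df t - df z)).
  { intros z Hz. apply (is_derive_minus (fun z => f t + df t * (z - t)) f z (df t) (df z)).
    - auto_derive; [exact I|ring].
    - apply Hd, Hz. }
  assert (G s >= G t); [|unfold G in *; lra].
  destruct (Rle_dec t s) as [Hts|Hst].
  - apply Rle_ge, (nondecreasing_of_derive_nonneg G (fun z => df t - df z)); [lra| |].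
    + intros z Hz. apply HG. lra.
    + intros z Hz. pose proof (Hdecr t z ltac:(lra) ltac:(lra) ltac:(lra)). lra.
  - assert (- G t >= - G s); [|lra].
    apply Rle_ge, (nondecreasing_of_derive_nonneg (fun z => - G z) (fun z => - (df t - df z))); [lra| |].
    + intros z Hz. apply (is_derive_opp G), HG. lra.
    + intros z Hz. pose proof (Hdecr z t ltac:(lra) ltac:(lra) ltac:(lra)). lra.
Qed.

Lemma succ_mul_ln_le x : 0 < x <= 1 -> (x + 1) * ln x <= 2 * (x - 1).
Proof.
  intros Hx.
  set (u := fun z => (z + 1) * ln z - 2 * (z - 1)).
  assert (u x <= u 1); [|unfold u in *; rewrite ln_1 in *; lra].
  apply (nondecreasing_of_derive_nonneg u (fun z => ln z + (z + 1) / z - 2)); [lra| |].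
  - intros z Hz. unfold u. auto_derive; [lra|field; lra].
  - intros z Hz. pose proof (one_sub_inv_le_ln z ltac:(lra)).
    replace ((z + 1) / z) with (1 + / z) by (field; lra). lra.
Qed.

Definition logmean x := (x - 1) / ln x.
Definition dlogmean x := (x * ln x - x + 1) / (x * (ln x * ln x)).
Definition d2logmean x := - ((x + 1) * ln x - 2 * (x - 1)) / (x * x * (ln x * ln x * ln x)).

Lemma is_derive_logmean x : 0 < x < 1 -> is_derive logmean x (dlogmean x).
Proof.
  intros Hx. pose proof (ln_lt0 x Hx). unfold logmean, dlogmean.
  auto_derive; [repeat split; lra|field; split; lra].
Qed.

Lemma is_derive_dlogmean x : 0 < x < 1 -> is_derive dlogmean x (d2logmean x).
Proof.
  intros Hx. pose proof (ln_lt0 x Hx). unfold dlogmean, d2logmean.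
  auto_derive.
  - assert (ln x * ln x > 0) by nra. repeat split; try lra.
    apply Rmult_integral_contrapositive. split; lra.
  - field. split; lra.
Qed.

Lemma d2logmean_le0 x : 0 < x < 1 -> d2logmean x <= 0.
Proof.
  intros Hx. pose proof (ln_lt0 x Hx). pose proof (succ_mul_ln_le x ltac:(lra)).
  assert (Hden : 0 < x * x * (ln x * ln x * - ln x)).
  { apply Rmult_lt_0_compat; [nra|]. apply Rmult_lt_0_compat; [nra|lra]. }
  unfold d2logmean, Rdiv.
  replace (x * x * (ln x * ln x * ln x)) with (- (x * x * (ln x * ln x * - ln x))) by ring.
  rewrite Rinv_opp. pose proof (Rinv_0_lt_compat _ Hden). nra.
Qed.

Lemma logmean_below_tangent t s : 0 < t < 1 -> 0 < s < 1 ->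
  logmean s <= logmean t + dlogmean t * (s - t).
Proof.
  apply (below_tangent_of_derive_nonincreasing logmean dlogmean 0 1).
  - apply is_derive_logmean.
  - intros x y Hx Hxy Hy. assert (- dlogmean x <= - dlogmean y); [|lra].
    apply (nondecreasing_of_derive_nonneg (fun z => - dlogmean z) (fun z => - d2logmean z)); [lra| |].
    + intros z Hz. apply (is_derive_opp dlogmean), is_derive_dlogmean. lra.
    + intros z Hz. pose proof (d2logmean_le0 z ltac:(lra)). lra.
Qed.

Lemma logmean_pos x : 0 < x < 1 -> 0 < logmean x.
Proof.
  intros Hx. pose proof (ln_lt0 x Hx). unfold logmean, Rdiv.
  pose proof (Rinv_lt_0_compat _ H). nra.
Qed.

Definition negxlnx x := - (x * ln x).

Lemma negxlnx_0 : negxlnx 0 = 0.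
Proof. unfold negxlnx. ring. Qed.

Lemma negxlnx_1 : negxlnx 1 = 0.
Proof. unfold negxlnx. rewrite ln_1. ring. Qed.

Lemma negxlnx_ge0 x : 0 <= x <= 1 -> 0 <= negxlnx x.
Proof.
  intros Hx. unfold negxlnx. destruct (Req_dec x 0) as [->|Hx0]; [lra|].
  assert (ln x <= 0) by (rewrite <- ln_1; apply ln_le; lra). nra.
Qed.

Lemma negxlnx_pos x : 0 < x < 1 -> 0 < negxlnx x.
Proof. intros Hx. pose proof (ln_lt0 x Hx). unfold negxlnx. nra. Qed.

Lemma negxlnx_neq0 x : 0 <= x <= 1 -> negxlnx x <> 0 -> 0 < x < 1.
Proof.
  intros Hx Hne.
  destruct (Req_dec x 0) as [->|]; [now rewrite negxlnx_0 in Hne|].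
  destruct (Req_dec x 1) as [->|]; [now rewrite negxlnx_1 in Hne|]. lra.
Qed.

Lemma negxlnx_logmean x : 0 < x < 1 -> negxlnx x = x * (1 - x) / logmean x.
Proof. intros Hx. pose proof (ln_lt0 x Hx). unfold negxlnx, logmean. field. lra. Qed.

(* First-order bound on [ln (negxlnx t / negxlnx s)]: write [negxlnx] as
   [x (1 - x) / logmean x], bound [ln] by [z - 1] and use the concavity of [logmean]. *)
Definition lnratio_ub t s :=
  - ln (s / t) - ln ((1 - s) / (1 - t)) + dlogmean t / logmean t * (s - t).

Lemma ln_negxlnx_sub_le t s : 0 < t < 1 -> 0 < s < 1 ->
  ln (negxlnx t) - ln (negxlnx s) <= lnratio_ub t s.
Proof.
  intros Ht Hs. pose proof (logmean_pos t Ht). pose proof (logmean_pos s Hs).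
  rewrite !negxlnx_logmean by lra. unfold lnratio_ub.
  rewrite (ln_div (t * (1 - t))), (ln_div (s * (1 - s))), (ln_div s), (ln_div (1 - s))
    by first [lra | apply Rmult_lt_0_compat; lra].
  rewrite !ln_mult by lra.
  pose proof (ln_le_sub1 (logmean s / logmean t) ltac:(apply Rdiv_lt_0_compat; lra)) as Hln.
  rewrite ln_div in Hln by lra.
  pose proof (logmean_below_tangent t s Ht Hs).
  assert (logmean s / logmean t - 1 <= dlogmean t / logmean t * (s - t)); [|lra].
  apply (Rmult_le_reg_r (logmean t)); [lra|].
  replace ((logmean s / logmean t - 1) * logmean t) with (logmean s - logmean t) by (field; lra).
  replace (dlogmean t / logmean t * (s - t) * logmean t) with (dlogmean t * (s - t)) by (field; lra).
  lra.
Qed.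

(** * The log-sum inequality *)

Lemma mul_ln_div_scal c a b : c * a * ln (c * a / (c * b)) = c * (a * ln (a / b)).
Proof.
  destruct (Req_dec c 0) as [->|Hc]; [ring|]. rewrite Rdiv_mult_l_l by exact Hc. ring.
Qed.

Lemma mul_ln_div_ge a b c : 0 <= a -> 0 <= b -> (b = 0 -> a = 0) -> 0 < c ->
  a * ln c + a - c * b <= a * ln (a / b).
Proof.
  intros Ha Hb Hab Hc. destruct (Req_dec a 0) as [->|Ha0]; [nra|].
  assert (Hb0 : 0 < b) by (destruct (Req_dec b 0); [tauto|lra]).
  pose proof (ln_le_sub1 (c * b / a) ltac:(apply Rdiv_lt_0_compat; nra)) as Hln.
  rewrite ln_div, ln_mult in Hln by nra. rewrite ln_div by lra.
  assert (a * (ln c + ln b - ln a) <= a * (c * b / a - 1)) by (apply Rmult_le_compat_l; lra).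
  replace (a * (c * b / a - 1)) with (c * b - a) in H by (field; lra). lra.
Qed.

Lemma log_sum_inequality k (a b : nat -> R) :
  (forall i, (i < k)%nat -> 0 <= a i) -> (forall i, (i < k)%nat -> 0 <= b i) ->
  (forall i, (i < k)%nat -> b i = 0 -> a i = 0) ->
  0 < sumn k a -> 0 < sumn k b ->
  sumn k a * ln (sumn k a / sumn k b) <= sumn k (fun i => a i * ln (a i / b i)).
Proof.
  intros Ha Hb Hab HA HB. set (c := sumn k a / sumn k b).
  assert (Hc : 0 < c) by (apply Rdiv_lt_0_compat; lra).
  apply Rle_trans with (sumn k (fun i => a i * ln c + a i - c * b i)).
  - rewrite !sumn_minus, sumn_plus, !sumn_scal.
    rewrite (sumn_ext k (fun i => a i * ln c) (fun i => ln c * a i)) by (intros; ring). rewrite sumn_scal.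
    unfold c. field_simplify; lra.
  - apply sumn_le. intros i Hi. apply mul_ln_div_ge; auto.
Qed.

Lemma log_sum_inequality2 a1 a2 b1 b2 :
  0 <= a1 -> 0 <= a2 -> 0 <= b1 -> 0 <= b2 -> (b1 = 0 -> a1 = 0) -> (b2 = 0 -> a2 = 0) ->
  0 < a1 + a2 -> 0 < b1 + b2 ->
  (a1 + a2) * ln ((a1 + a2) / (b1 + b2)) <= a1 * ln (a1 / b1) + a2 * ln (a2 / b2).
Proof.
  intros Ha1 Ha2 Hb1 Hb2 H1 H2 HA HB.
  pose proof (log_sum_inequality 2 (fun i => if Nat.eqb i 0 then a1 else a2)
                                   (fun i => if Nat.eqb i 0 then b1 else b2)) as H.
  unfold sumn in H. simpl in H. rewrite !Rplus_0_r in H.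
  apply H; try (intros [|[|i]] Hi; simpl; auto; lia); assumption.
Qed.

Lemma wmul_ge0 k (w x : nat -> R) :
  (forall i, (i < k)%nat -> 0 <= w i) -> (forall i, (i < k)%nat -> w i <> 0 -> 0 < x i) ->
  forall i, (i < k)%nat -> 0 <= w i * x i.
Proof.
  intros Hw Hwx i Hi. destruct (Req_dec (w i) 0) as [->|Hwi]; [lra|].
  pose proof (Hwx i Hi Hwi). pose proof (Hw i Hi). nra.
Qed.

Lemma wmean_pos k (w x : nat -> R) :
  (forall i, (i < k)%nat -> 0 <= w i) -> sumn k w = 1 ->
  (forall i, (i < k)%nat -> w i <> 0 -> 0 < x i) ->
  0 < sumn k (fun i => w i * x i).
Proof.
  intros Hw Hs Hwx. destruct (sumn_neq0_term k w) as [i [Hi Hwi]]; [lra|].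
  apply (sumn_pos _ _ i); [apply wmul_ge0; auto|exact Hi|].
  pose proof (Hw i Hi). pose proof (Hwx i Hi Hwi). apply Rmult_lt_0_compat; lra.
Qed.

Lemma ln_jensen k (w x : nat -> R) :
  (forall i, (i < k)%nat -> 0 <= w i) -> sumn k w = 1 ->
  (forall i, (i < k)%nat -> w i <> 0 -> 0 < x i) ->
  sumn k (fun i => w i * ln (x i)) <= ln (sumn k (fun i => w i * x i)).
Proof.
  intros Hw Hs Hwx. pose proof (wmean_pos k w x Hw Hs Hwx) as Hm.
  assert (Hterm : sumn k (fun i => w i * ln (w i / (w i * x i)))
                  = - sumn k (fun i => w i * ln (x i))).
  { rewrite <- sumn_opp.
    apply sumn_ext. intros i Hi. destruct (Req_dec (w i) 0) as [->|Hwi]; [ring|].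
    rewrite <- (Rmult_1_r (w i)) at 2. rewrite Rdiv_mult_l_l by exact Hwi.
    unfold Rdiv. rewrite Rmult_1_l, ln_Rinv by (apply Hwx; auto). ring. }
  pose proof (log_sum_inequality k w (fun i => w i * x i) Hw) as H.
  cbv beta in H. rewrite Hterm, Hs, Rmult_1_l in H.
  assert (- ln (sumn k (fun i => w i * x i)) <= - sumn k (fun i => w i * ln (x i))); [|lra].
  rewrite <- ln_Rinv, <- Rdiv_1_l by exact Hm. apply H; [| |lra|exact Hm].
  - apply wmul_ge0; auto.
  - intros i Hi Hz. destruct (Req_dec (w i) 0) as [|Hwi]; [auto|].
    pose proof (Hwx i Hi Hwi). apply Rmult_integral in Hz. lra.
Qed.

Definition entropy (M : nat) (r : nat -> R) := sumn M (fun w => negxlnx (r w)).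

Lemma condH_entropy M P enc ys :
  condH M P enc ys = entropy M (fun w => post M P enc w ys).
Proof.
  unfold condH, entropy, negxlnx. rewrite <- sumn_opp. apply sumn_ext. intros w _.
  destruct (Req_EM_T _ 0) as [->|]; ring.
Qed.

Lemma kl_sumn nY (P : nat -> nat -> R) x x' :
  kl nY P x x' = sumn nY (fun y => P x y * ln (P x y / P x' y)).
Proof. apply sumn_ext. intros y _. destruct (Req_EM_T _ 0) as [->|]; ring. Qed.

Lemma kl_self nY (P : nat -> nat -> R) x : kl nY P x x = 0.
Proof.
  rewrite kl_sumn, <- (sumn_zero nY). apply sumn_ext. intros y _.
  destruct (Req_dec (P x y) 0) as [->|Hx]; [ring|].
  unfold Rdiv. rewrite Rinv_r, ln_1 by exact Hx. ring.
Qed.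

Lemma entropy_eq0_point_mass M (r : nat -> R) :
  (forall w, (w < M)%nat -> 0 <= r w) -> sumn M r = 1 -> entropy M r = 0 ->
  exists w0, (w0 < M)%nat /\ forall w, (w < M)%nat -> r w = if Nat.eqb w w0 then 1 else 0.
Proof.
  intros Hr Hs H0.
  assert (Hr1 : forall w, (w < M)%nat -> 0 <= r w <= 1).
  { intros w Hw. split; [auto|]. rewrite <- Hs. apply sumn_ge_term; auto. }
  destruct (sumn_neq0_term M r) as [w0 [Hw0 Hne]]; [lra|].
  assert (Hrw0 : r w0 = 1).
  { assert (negxlnx (r w0) = 0).
    { apply (sumn_nonneg_eq0 M (fun w => negxlnx (r w))); auto.
      intros w Hw. apply negxlnx_ge0, Hr1, Hw. }
    destruct (Req_dec (r w0) 1) as [|Hn1]; [assumption|].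
    pose proof (negxlnx_pos (r w0) ltac:(pose proof (Hr1 w0 Hw0); lra)). lra. }
  exists w0. split; [exact Hw0|]. intros w Hw.
  destruct (Nat.eqb_spec w w0) as [->|Hww0]; [exact Hrw0|].
  pose proof (sumn_split_at M w0 r Hw0) as Hsplit. rewrite Hs, Hrw0 in Hsplit.
  pose proof (sumn_nonneg_eq0 M (fun j => if Nat.eqb j w0 then 0 else r j) w) as Hz.
  simpl in Hz. destruct (Nat.eqb_spec w w0); [lia|]. apply Hz; [|lra|exact Hw].
  intros j Hj. destruct (Nat.eqb j w0); [lra|auto].
Qed.

(** * One step of Bayesian updating *)

Section BayesUpdate.

(* [L w] is the output law when message [w] is sent, so that [kl nY L w v] is the
   divergence between the output laws of messages [w] and [v]. *)
Variables (M nY : nat) (p : nat -> R) (L : nat -> nat -> R) (B : R).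
Hypothesis prior_ge0 : forall w, (w < M)%nat -> 0 <= p w.
Hypothesis prior_sum1 : sumn M p = 1.
Hypothesis lik_ge0 : forall w y, (w < M)%nat -> (y < nY)%nat -> 0 <= L w y.
Hypothesis lik_sum1 : forall w, (w < M)%nat -> sumn nY (L w) = 1.
Hypothesis kl_le : forall w v, (w < M)%nat -> (v < M)%nat ->
  kl_finite nY L w v /\ kl nY L w v <= B.

Definition marg y := sumn M (fun w => p w * L w y).
(* The posterior after output [y]; it is [0] when [marg y = 0]. *)
Definition bayes y w := p w * L w y / marg y.
(* The prior conditioned on [W <> w], and the resulting output law. *)
Definition cprior w v := if Nat.eqb v w then 0 else p v / (1 - p w).
Definition marg_not w y := sumn M (fun v => cprior w v * L v y).

Lemma prior_le1 w : (w < M)%nat -> p w <= 1.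
Proof. intros Hw. rewrite <- prior_sum1. apply sumn_ge_term; auto. Qed.

Lemma prior_lik_ge0 w y : (w < M)%nat -> (y < nY)%nat -> 0 <= p w * L w y.
Proof. intros Hw Hy. apply Rmult_le_pos; auto. Qed.

Lemma marg_ge0 y : (y < nY)%nat -> 0 <= marg y.
Proof. intros Hy. apply sumn_nonneg. intros w Hw. apply prior_lik_ge0; auto. Qed.

Lemma marg_pos y : (y < nY)%nat -> marg y <> 0 -> 0 < marg y.
Proof. intros Hy Hq. pose proof (marg_ge0 y Hy). lra. Qed.

Lemma marg_eq0_term y w : (y < nY)%nat -> (w < M)%nat -> marg y = 0 -> p w * L w y = 0.
Proof. intros Hy Hw H0. apply (sumn_nonneg_eq0 M (fun v => p v * L v y)); auto. 
  intros v Hv. apply prior_lik_ge0; auto. Qed.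

Lemma lik_pos y w : (y < nY)%nat -> (w < M)%nat -> marg y <> 0 -> 0 < L w y.
Proof.
  intros Hy Hw Hq. destruct (sumn_neq0_term _ _ Hq) as [v [Hv Hne]].
  pose proof (lik_ge0 w y Hw Hy). destruct (Req_dec (L w y) 0) as [H0|]; [|lra].
  exfalso. apply Hne. rewrite (proj1 (kl_le v w Hv Hw) y Hy H0). ring.
Qed.

Lemma sumn_marg : sumn nY marg = 1.
Proof.
  unfold marg. rewrite sumn_comm, <- prior_sum1. apply sumn_ext. intros w Hw.
  rewrite sumn_scal, lik_sum1 by exact Hw. ring.
Qed.

Lemma bayes_ge0_le1 y w : (y < nY)%nat -> (w < M)%nat -> 0 <= bayes y w <= 1.
Proof.
  intros Hy Hw. unfold bayes. destruct (Req_dec (marg y) 0) as [->|Hq].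
  { unfold Rdiv. rewrite Rinv_0. lra. }
  pose proof (marg_pos y Hy Hq).
  pose proof (sumn_ge_term M (fun v => p v * L v y) w ltac:(intros; apply prior_lik_ge0; auto) Hw).
  pose proof (prior_lik_ge0 w y Hw Hy). cbv beta in *. fold (marg y) in *. split.
  - apply Rdiv_le_0_compat; lra.
  - apply (Rdiv_le_1 (p w * L w y)); lra.
Qed.

Lemma bayes_martingale w : (w < M)%nat -> sumn nY (fun y => marg y * bayes y w) = p w.
Proof.
  intros Hw. rewrite (sumn_ext nY _ (fun y => p w * L w y)).
  { rewrite sumn_scal, lik_sum1 by exact Hw. ring. }
  intros y Hy. unfold bayes. destruct (Req_dec (marg y) 0) as [Hq|Hq].
  - rewrite Hq, marg_eq0_term by auto. ring.
  - field. exact Hq.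
Qed.

Lemma cprior_ge0 w v : (v < M)%nat -> p w < 1 -> 0 <= cprior w v.
Proof.
  intros Hv Hw. unfold cprior. destruct (Nat.eqb v w); [lra|].
  apply Rdiv_le_0_compat; [auto|lra].
Qed.

Lemma sumn_cprior w : (w < M)%nat -> p w < 1 -> sumn M (cprior w) = 1.
Proof.
  intros Hw Hpw. pose proof (sumn_split_at M w p Hw) as Hs. rewrite prior_sum1 in Hs.
  unfold cprior. rewrite (sumn_ext M _ (fun v => / (1 - p w) * (if Nat.eqb v w then 0 else p v))).
  - rewrite sumn_scal. replace (sumn M _) with (1 - p w) by lra. field. lra.
  - intros v Hv. destruct (Nat.eqb v w); unfold Rdiv; ring.
Qed.

Lemma marg_split y w : (w < M)%nat -> p w < 1 ->
  marg y = p w * L w y + (1 - p w) * marg_not w y.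
Proof.
  intros Hw Hpw. unfold marg, marg_not. rewrite (sumn_split_at M w) by exact Hw.
  rewrite <- sumn_scal. f_equal. apply sumn_ext. intros v Hv. unfold cprior.
  destruct (Nat.eqb v w); [ring|field; lra].
Qed.

Lemma marg_not_pos y w : (y < nY)%nat -> (w < M)%nat -> marg y <> 0 -> p w < 1 ->
  0 < marg_not w y.
Proof.
  intros Hy Hw Hq Hpw.
  destruct (sumn_neq0_term M (cprior w)) as [v [Hv Hne]]; [rewrite sumn_cprior by assumption; lra|].
  apply (sumn_pos _ _ v); [|exact Hv|].
  - intros j Hj. apply Rmult_le_pos; [apply cprior_ge0|apply lik_ge0]; auto.
  - pose proof (cprior_ge0 w v Hv Hpw). pose proof (lik_pos y v Hy Hv Hq).
    apply Rmult_lt_0_compat; lra.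
Qed.

Lemma bayes_in01 y w : (y < nY)%nat -> (w < M)%nat -> marg y <> 0 -> 0 < p w < 1 ->
  0 < bayes y w < 1.
Proof.
  intros Hy Hw Hq Hpw. pose proof (lik_pos y w Hy Hw Hq).
  pose proof (marg_not_pos y w Hy Hw Hq ltac:(lra)). pose proof (marg_split y w Hw ltac:(lra)).
  assert (0 < p w * L w y) by (apply Rmult_lt_0_compat; lra).
  assert (0 < (1 - p w) * marg_not w y) by (apply Rmult_lt_0_compat; lra).
  unfold bayes. split.
  - apply Rdiv_lt_0_compat; lra.
  - apply (Rdiv_lt_1 (p w * L w y)); lra.
Qed.

Lemma one_sub_bayes y w : (w < M)%nat -> marg y <> 0 -> p w < 1 ->
  1 - bayes y w = (1 - p w) * marg_not w y / marg y.
Proof.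
  intros Hw Hq Hpw. unfold bayes.
  replace (1 - p w * L w y / marg y) with ((marg y - p w * L w y) / marg y) by (field; exact Hq).
  rewrite (marg_split y w Hw Hpw) at 1. f_equal. ring.
Qed.

(* Both information bounds below are instances of the log-sum inequality. *)
Lemma marg_mul_neg_ln_bayes_ratio_le y w : (y < nY)%nat -> (w < M)%nat -> 0 < p w ->
  marg y * - ln (bayes y w / p w) <= sumn M (fun v => p v * (L v y * ln (L v y / L w y))).
Proof.
  intros Hy Hw Hpw. destruct (Req_dec (marg y) 0) as [Hq|Hq].
  - rewrite Hq, Rmult_0_l, <- (sumn_zero M). right. apply sumn_ext. intros v Hv.
    rewrite <- Rmult_assoc, marg_eq0_term by auto. ring.
  - pose proof (marg_pos y Hy Hq). pose proof (lik_pos y w Hy Hw Hq).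
    replace (- ln (bayes y w / p w)) with (ln (marg y / L w y))
      by (unfold bayes; replace (p w * L w y / marg y / p w) with (L w y / marg y) by (field; lra);
          rewrite !ln_div by lra; ring).
    assert (Hb : sumn M (fun v => p v * L w y) = L w y).
    { rewrite (sumn_ext M _ (fun v => L w y * p v)) by (intros; ring).
      rewrite sumn_scal, prior_sum1. ring. }
    rewrite <- Hb at 1.
    rewrite (sumn_ext M (fun v => p v * (L v y * ln (L v y / L w y)))
                        (fun v => p v * L v y * ln (p v * L v y / (p v * L w y))))
      by (intros; rewrite mul_ln_div_scal; reflexivity).
    apply log_sum_inequality.
    + intros v Hv. apply prior_lik_ge0; auto.
    + intros v Hv. pose proof (prior_ge0 v Hv). nra.
    + intros v Hv Hz. apply Rmult_integral in Hz. destruct Hz as [->|]; [ring|lra].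
    + exact H.
    + rewrite Hb. exact H0.
Qed.

Lemma marg_mul_ln_div_marg_not_le y w : (y < nY)%nat -> (w < M)%nat -> marg y <> 0 ->
  0 < p w < 1 ->
  marg y * ln (marg y / marg_not w y) <= p w * (L w y * ln (L w y / marg_not w y)).
Proof.
  intros Hy Hw Hq Hpw. pose proof (lik_pos y w Hy Hw Hq).
  pose proof (marg_not_pos y w Hy Hw Hq ltac:(lra)).
  pose proof (log_sum_inequality2 (p w * L w y) ((1 - p w) * marg_not w y)
                (p w * marg_not w y) ((1 - p w) * marg_not w y)) as Hls.
  rewrite <- marg_split, mul_ln_div_scal in Hls by (auto; lra).
  replace (p w * marg_not w y + (1 - p w) * marg_not w y) with (marg_not w y) in Hls by ring.
  unfold Rdiv at 3 in Hls. rewrite Rinv_r, ln_1, Rmult_0_r, Rplus_0_r in Hls by nra.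
  apply Hls; try nra. apply marg_pos; auto.
Qed.

Lemma lik_mul_ln_div_marg_not_le y w : (y < nY)%nat -> (w < M)%nat -> marg y <> 0 ->
  p w < 1 ->
  L w y * ln (L w y / marg_not w y) <= sumn M (fun v => cprior w v * (L w y * ln (L w y / L v y))).
Proof.
  intros Hy Hw Hq Hpw. pose proof (lik_pos y w Hy Hw Hq).
  assert (Ha : sumn M (fun v => cprior w v * L w y) = L w y).
  { rewrite (sumn_ext M _ (fun v => L w y * cprior w v)) by (intros; ring).
    rewrite sumn_scal, sumn_cprior by auto. ring. }
  rewrite <- Ha at 1 2.
  rewrite (sumn_ext M (fun v => cprior w v * (L w y * ln (L w y / L v y)))
             (fun v => cprior w v * L w y * ln (cprior w v * L w y / (cprior w v * L v y))))
    by (intros; rewrite mul_ln_div_scal; reflexivity).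
  apply log_sum_inequality.
  - intros v Hv. pose proof (cprior_ge0 w v Hv Hpw). nra.
  - intros v Hv. apply Rmult_le_pos; [apply cprior_ge0|apply lik_ge0]; auto.
  - intros v Hv Hz. pose proof (lik_pos y v Hy Hv Hq).
    apply Rmult_integral in Hz. destruct Hz as [->|]; [ring|lra].
  - rewrite Ha. exact H.
  - apply marg_not_pos; auto.
Qed.

Lemma marg_mul_neg_ln_compl_ratio_le y w : (y < nY)%nat -> (w < M)%nat -> 0 < p w < 1 ->
  marg y * - ln ((1 - bayes y w) / (1 - p w))
  <= p w * sumn M (fun v => cprior w v * (L w y * ln (L w y / L v y))).
Proof.
  intros Hy Hw Hpw. destruct (Req_dec (marg y) 0) as [Hq|Hq].
  - assert (HL : L w y = 0).
    { pose proof (marg_eq0_term y w Hy Hw Hq). apply Rmult_integral in H. lra. }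
    rewrite Hq, Rmult_0_l, (sumn_ext M _ (fun _ => 0)), sumn_zero by (intros; rewrite HL; ring).
    lra.
  - pose proof (marg_pos y Hy Hq). pose proof (marg_not_pos y w Hy Hw Hq ltac:(lra)).
    rewrite one_sub_bayes by (auto; lra).
    replace (- ln ((1 - p w) * marg_not w y / marg y / (1 - p w))) with (ln (marg y / marg_not w y))
      by (replace ((1 - p w) * marg_not w y / marg y / (1 - p w)) with (marg_not w y / marg y)
            by (field; lra); rewrite !ln_div by lra; ring).
    eapply Rle_trans; [apply marg_mul_ln_div_marg_not_le; auto|].
    apply Rmult_le_compat_l; [lra|]. apply lik_mul_ln_div_marg_not_le; auto; lra.
Qed.

Lemma B_ge0 : 0 <= B.
Proof.
  destruct (sumn_neq0_term M p) as [w [Hw _]]; [lra|].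
  pose proof (proj2 (kl_le w w Hw Hw)). rewrite kl_self in H. exact H.
Qed.

Lemma sumn_prior_kl_le w : (w < M)%nat ->
  sumn M (fun v => p v * kl nY L v w) <= (1 - p w) * B.
Proof.
  intros Hw. rewrite (sumn_split_at M w) by exact Hw. rewrite kl_self, Rmult_0_r, Rplus_0_l.
  apply Rle_trans with (sumn M (fun v => B * (if Nat.eqb v w then 0 else p v))).
  - apply sumn_le. intros v Hv. destruct (Nat.eqb v w); [lra|].
    rewrite Rmult_comm. apply Rmult_le_compat_r; [auto|apply kl_le; auto].
  - rewrite sumn_scal. pose proof (sumn_split_at M w p Hw) as Hs. rewrite prior_sum1 in Hs.
    replace (sumn M _) with (1 - p w) by lra. lra.
Qed.

Lemma sumn_cprior_kl_le w : (w < M)%nat -> p w < 1 ->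
  sumn M (fun v => cprior w v * kl nY L w v) <= B.
Proof.
  intros Hw Hpw. apply Rle_trans with (sumn M (fun v => B * cprior w v)).
  - apply sumn_le. intros v Hv. rewrite Rmult_comm.
    apply Rmult_le_compat_r; [apply cprior_ge0|apply kl_le]; auto.
  - rewrite sumn_scal, sumn_cprior by auto. lra.
Qed.

Lemma sumn_marg_neg_ln_bayes_ratio_le w : (w < M)%nat -> 0 < p w ->
  sumn nY (fun y => marg y * - ln (bayes y w / p w)) <= (1 - p w) * B.
Proof.
  intros Hw Hpw. eapply Rle_trans; [|apply sumn_prior_kl_le, Hw].
  eapply Rle_trans; [apply sumn_le; intros y Hy; apply marg_mul_neg_ln_bayes_ratio_le; auto|].
  rewrite sumn_comm. right. apply sumn_ext. intros v Hv. rewrite kl_sumn, <- sumn_scal. reflexivity.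
Qed.

Lemma sumn_marg_neg_ln_compl_ratio_le w : (w < M)%nat -> 0 < p w < 1 ->
  sumn nY (fun y => marg y * - ln ((1 - bayes y w) / (1 - p w))) <= p w * B.
Proof.
  intros Hw Hpw. apply Rle_trans with (p w * sumn M (fun v => cprior w v * kl nY L w v)).
  - eapply Rle_trans; [apply sumn_le; intros y Hy; apply marg_mul_neg_ln_compl_ratio_le; auto|].
    rewrite sumn_scal, sumn_comm. right. f_equal. apply sumn_ext. intros v Hv.
    rewrite kl_sumn, <- sumn_scal. reflexivity.
  - apply Rmult_le_compat_l; [lra|]. apply sumn_cprior_kl_le; auto; lra.
Qed.

Lemma sumn_marg_lnratio_ub_le w : (w < M)%nat -> 0 < p w < 1 ->
  sumn nY (fun y => marg y * lnratio_ub (p w) (bayes y w)) <= B.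
Proof.
  intros Hw Hpw. unfold lnratio_ub.
  set (g := dlogmean (p w) / logmean (p w)).
  rewrite (sumn_ext nY _ (fun y => marg y * - ln (bayes y w / p w)
             + marg y * - ln ((1 - bayes y w) / (1 - p w)) + g * (marg y * bayes y w - p w * marg y)))
    by (intros; ring).
  rewrite !sumn_plus, sumn_scal, sumn_minus, sumn_scal, bayes_martingale, sumn_marg by exact Hw.
  pose proof (sumn_marg_neg_ln_bayes_ratio_le w Hw ltac:(lra)).
  pose proof (sumn_marg_neg_ln_compl_ratio_le w Hw Hpw). nra.
Qed.

Lemma entropy_prior_ge0 : 0 <= entropy M p.
Proof. apply sumn_nonneg. intros w Hw. apply negxlnx_ge0. split; [auto|apply prior_le1, Hw]. Qed.

Lemma entropy_bayes_eq0 y : (y < nY)%nat -> entropy M p = 0 -> entropy M (bayes y) = 0.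
Proof.
  intros Hy H0. destruct (entropy_eq0_point_mass M p prior_ge0 prior_sum1 H0) as [w0 [Hw0 Hp]].
  assert (Hq : marg y = L w0 y).
  { unfold marg. rewrite (sumn_split_at M w0), Hp, Nat.eqb_refl by exact Hw0.
    rewrite (sumn_ext M _ (fun _ => 0)), sumn_zero; [ring|].
    intros v Hv. rewrite Hp by exact Hv. destruct (Nat.eqb v w0); ring. }
  unfold entropy. rewrite <- (sumn_zero M). apply sumn_ext. intros w Hw.
  unfold bayes. rewrite Hq, Hp by exact Hw. destruct (Nat.eqb_spec w w0) as [->|_].
  - rewrite Rmult_1_l. destruct (Req_dec (L w0 y) 0) as [->|Hne].
    + unfold Rdiv. rewrite Rmult_0_l. apply negxlnx_0.
    + unfold Rdiv. rewrite Rinv_r by exact Hne. apply negxlnx_1.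
  - unfold Rdiv. rewrite !Rmult_0_l. apply negxlnx_0.
Qed.

Definition ent_wt w := negxlnx (p w) / entropy M p.

Lemma ent_wt_ge0 w : (w < M)%nat -> 0 <= ent_wt w.
Proof.
  intros Hw. unfold ent_wt. destruct (Req_dec (entropy M p) 0) as [->|Hne].
  - unfold Rdiv. rewrite Rinv_0. lra.
  - apply Rdiv_le_0_compat; [|pose proof entropy_prior_ge0; lra].
    apply negxlnx_ge0. split; [auto|apply prior_le1, Hw].
Qed.

Lemma sumn_ent_wt : entropy M p <> 0 -> sumn M ent_wt = 1.
Proof.
  intros Hne. unfold ent_wt.
  rewrite (sumn_ext M _ (fun w => / entropy M p * negxlnx (p w))) by (intros; unfold Rdiv; ring).
  rewrite sumn_scal. fold (entropy M p). field. exact Hne.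
Qed.

Lemma ent_wt_neq0 w : (w < M)%nat -> ent_wt w <> 0 -> 0 < p w < 1.
Proof.
  intros Hw Hne. apply negxlnx_neq0; [split; [auto|apply prior_le1, Hw]|].
  intros H0. apply Hne. unfold ent_wt. rewrite H0. unfold Rdiv. ring.
Qed.

Lemma sumn_ent_wt_mul_ratio_le y : (y < nY)%nat -> 0 < entropy M p ->
  sumn M (fun w => ent_wt w * (negxlnx (bayes y w) / negxlnx (p w)))
  <= entropy M (bayes y) / entropy M p.
Proof.
  intros Hy Hpos. apply Rle_trans with (sumn M (fun w => negxlnx (bayes y w) / entropy M p)).
  - apply sumn_le. intros w Hw. pose proof (negxlnx_ge0 _ (bayes_ge0_le1 y w Hy Hw)).
    destruct (Req_dec (ent_wt w) 0) as [->|Hne].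
    + rewrite Rmult_0_l. apply Rdiv_le_0_compat; assumption.
    + pose proof (negxlnx_pos _ (ent_wt_neq0 w Hw Hne)). unfold ent_wt. right. field. lra.
  - right. unfold Rdiv. rewrite (sumn_ext M _ (fun w => / entropy M p * negxlnx (bayes y w)))
      by (intros; ring).
    rewrite sumn_scal. unfold entropy at 2. ring.
Qed.

Lemma ent_wt_mul_neg_ln_ratio_le y w : (y < nY)%nat -> (w < M)%nat -> marg y <> 0 ->
  ent_wt w * - ln (negxlnx (bayes y w) / negxlnx (p w))
  <= ent_wt w * lnratio_ub (p w) (bayes y w).
Proof.
  intros Hy Hw Hq. destruct (Req_dec (ent_wt w) 0) as [->|Hne]; [lra|].
  pose proof (ent_wt_neq0 w Hw Hne) as Hp. pose proof (bayes_in01 y w Hy Hw Hq Hp) as Hb.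
  apply Rmult_le_compat_l; [apply ent_wt_ge0, Hw|].
  rewrite ln_div by (apply negxlnx_pos; auto).
  pose proof (ln_negxlnx_sub_le (p w) (bayes y w) Hp Hb). lra.
Qed.

Lemma ln_entropy_sub_le y : (y < nY)%nat -> marg y <> 0 -> 0 < entropy M p ->
  ln (entropy M p) - ln (entropy M (bayes y))
  <= sumn M (fun w => ent_wt w * lnratio_ub (p w) (bayes y w)).
Proof.
  intros Hy Hq Hpos. set (x := fun w => negxlnx (bayes y w) / negxlnx (p w)).
  assert (Hx : forall w, (w < M)%nat -> ent_wt w <> 0 -> 0 < x w).
  { intros w Hw Hne. pose proof (ent_wt_neq0 w Hw Hne) as Hp.
    apply Rdiv_lt_0_compat; apply negxlnx_pos; [apply bayes_in01|]; auto. }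
  pose proof (wmean_pos M ent_wt x ent_wt_ge0 (sumn_ent_wt ltac:(lra)) Hx) as Hm.
  pose proof (ln_jensen M ent_wt x ent_wt_ge0 (sumn_ent_wt ltac:(lra)) Hx) as Hj.
  pose proof (sumn_ent_wt_mul_ratio_le y Hy Hpos) as Hle.
  change (sumn M (fun w => ent_wt w * x w) <= entropy M (bayes y) / entropy M p) in Hle.
  assert (Hbpos : 0 < entropy M (bayes y)).
  { assert (0 < entropy M (bayes y) / entropy M p) as Hr by lra.
    unfold Rdiv in Hr. pose proof (Rinv_0_lt_compat _ Hpos). nra. }
  pose proof (ln_le _ _ Hm Hle) as Hln. rewrite ln_div in Hln by assumption.
  eapply Rle_trans; [|apply sumn_le; intros w Hw; apply ent_wt_mul_neg_ln_ratio_le; auto].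
  change (ln (entropy M p) - ln (entropy M (bayes y)) <= sumn M (fun w => ent_wt w * - ln (x w))).
  rewrite (sumn_ext M (fun w => ent_wt w * - ln (x w)) (fun w => - (ent_wt w * ln (x w))))
    by (intros; ring).
  rewrite sumn_opp. lra.
Qed.

Theorem sumn_marg_ln_entropy_drop_le :
  sumn nY (fun y => marg y * (ln (entropy M p) - ln (entropy M (bayes y)))) <= B.
Proof.
  destruct (Req_dec (entropy M p) 0) as [H0|Hne].
  - rewrite (sumn_ext nY _ (fun _ => 0)), sumn_zero; [apply B_ge0|].
    intros y Hy. rewrite H0, entropy_bayes_eq0 by auto. ring.
  - pose proof entropy_prior_ge0.
    apply Rle_trans with
      (sumn nY (fun y => sumn M (fun w => ent_wt w * (marg y * lnratio_ub (p w) (bayes y w))))).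
    + apply sumn_le. intros y Hy.
      rewrite (sumn_ext M _ (fun w => marg y * (ent_wt w * lnratio_ub (p w) (bayes y w))))
        by (intros; ring).
      rewrite sumn_scal. destruct (Req_dec (marg y) 0) as [->|Hq]; [lra|].
      apply Rmult_le_compat_l; [apply marg_ge0, Hy|apply ln_entropy_sub_le; auto; lra].
    + rewrite sumn_comm. apply Rle_trans with (sumn M (fun w => B * ent_wt w)).
      * apply sumn_le. intros w Hw. rewrite sumn_scal, Rmult_comm.
        destruct (Req_dec (ent_wt w) 0) as [->|Hw0]; [lra|].
        apply Rmult_le_compat_r; [apply ent_wt_ge0, Hw|].
        apply sumn_marg_lnratio_ub_le; [|apply ent_wt_neq0]; auto.
      * rewrite sumn_scal, sumn_ent_wt by exact Hne. lra.
Qed.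
End BayesUpdate.

(** * Feedback codes *)

Lemma pjoint_snoc M P enc w ys y :
  pjoint M P enc w (ys ++ y :: nil) = pjoint M P enc w ys * P (enc w ys) y.
Proof.
  unfold pjoint. rewrite length_app, Nat.add_1_r, prodn_S.
  rewrite (prodn_ext (length ys) _ (fun i => P (enc w (firstn i ys)) (nth i ys 0%nat))).
  - rewrite firstn_app, Nat.sub_diag, firstn_all, app_nth2, Nat.sub_diag by lia.
    simpl. rewrite app_nil_r. ring.
  - intros i Hi. rewrite firstn_app, app_nth1 by lia.
    replace (i - length ys)%nat with 0%nat by lia. simpl. rewrite app_nil_r. reflexivity.
Qed.

Lemma pjoint_ge0 nX nY M P enc w ys :
  (forall x y, (x < nX)%nat -> (y < nY)%nat -> 0 <= P x y) -> valid_encoder M nX enc ->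
  valid_outputs nY ys -> (w < M)%nat -> 0 <= pjoint M P enc w ys.
Proof.
  intros HP Henc Hys Hw. unfold pjoint. apply Rmult_le_pos.
  - left. apply Rinv_0_lt_compat, lt_0_INR. lia.
  - apply prodn_nonneg. intros i Hi. apply HP; [apply Henc, Hw|apply Hys, nth_In, Hi].
Qed.

Lemma sumn_post M P enc ys : pY M P enc ys <> 0 -> sumn M (fun w => post M P enc w ys) = 1.
Proof.
  intros HQ. unfold post.
  rewrite (sumn_ext M _ (fun w => / pY M P enc ys * pjoint M P enc w ys)) by (intros; unfold Rdiv; ring).
  rewrite sumn_scal. fold (pY M P enc ys). field. exact HQ.
Qed.

Lemma pY_snoc M P enc ys y :
  pY M P enc (ys ++ y :: nil) = sumn M (fun w => pjoint M P enc w ys * P (enc w ys) y).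
Proof. apply sumn_ext. intros w _. apply pjoint_snoc. Qed.

Lemma pY_snoc_div M P enc ys y :
  pY M P enc (ys ++ y :: nil) / pY M P enc ys
  = marg M (fun w => post M P enc w ys) (fun w y => P (enc w ys) y) y.
Proof.
  rewrite pY_snoc. unfold marg, post, Rdiv. rewrite Rmult_comm, <- sumn_scal.
  apply sumn_ext. intros w _. ring.
Qed.

Lemma post_snoc M P enc ys y w : pY M P enc ys <> 0 ->
  post M P enc w (ys ++ y :: nil)
  = bayes M (fun w => post M P enc w ys) (fun w y => P (enc w ys) y) y w.
Proof.
  intros HQ. unfold bayes. rewrite <- pY_snoc_div. unfold post. rewrite pjoint_snoc.
  unfold Rdiv. rewrite Rinv_mult, Rinv_inv.
  rewrite <- (Rmult_1_r (_ * _ * / _)), <- (Rinv_r _ HQ). ring.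
Qed.

Theorem lemma7 (nX nY : nat) (P : nat -> nat -> R) (M : nat)
  (enc : nat -> list nat -> nat) (B : R) :
  is_DMC nX nY P ->
  (0 < M)%nat ->
  valid_encoder M nX enc ->
  (* B = max_{x,x'} D(P(.|x)||P(.|x')), assumed finite *)
  (forall x x', (x < nX)%nat -> (x' < nX)%nat ->
     kl_finite nY P x x' /\ kl nY P x x' <= B) ->
  (exists x x', (x < nX)%nat /\ (x' < nX)%nat /\ kl nY P x x' = B) ->
  forall (ys : list nat),
    valid_outputs nY ys ->
    0 < pY M P enc ys ->
    sumn nY (fun y =>
      (pY M P enc (ys ++ y :: nil) / pY M P enc ys) *
      (ln (condH M P enc ys) - ln (condH M P enc (ys ++ y :: nil)))) <= B.
Proof.
  intros [_ [P_ge0 P_sum1]] _ Henc Hkl _ ys Hys HQ.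
  assert (Hpost : forall w, (w < M)%nat -> 0 <= post M P enc w ys).
  { intros w Hw. apply Rdiv_le_0_compat; [apply (pjoint_ge0 nX nY)|]; assumption. }
  eapply Rle_trans; [|apply (sumn_marg_ln_entropy_drop_le M nY _ (fun w y => P (enc w ys) y) B
                               Hpost (sumn_post M P enc ys ltac:(lra)))].
  - right. apply sumn_ext. intros y _.
    rewrite pY_snoc_div, !condH_entropy. do 3 f_equal.
    apply sumn_ext. intros w _. rewrite post_snoc by lra. reflexivity.
  - intros w y Hw Hy. apply P_ge0; auto.
  - intros w Hw. apply P_sum1; auto.
  - intros w v Hw Hv. apply Hkl; auto.
Qed.
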